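(* Let $n\ge 2$ and let $a_1,\dots,a_n,b_1,\dots,b_n\in\{-1,+1\}$ be arbitrary. Define $\mathcal{S}_0=\sum_{i=1}^n a_i$, $\mathcal{S}_{00}=\sum_{i\neq j}a_ia_j$, $\mathcal{S}_{11}=\sum_{i\ne j}b_ib_j$, $\mathcal{S}_{01}=\sum_{i\neq j}a_ib_j$ (sums over ordered pairs $(i,j)$ of distinct indices in $\{1,\dots,n\}$). Then $$-2\mathcal{S}_0+\tfrac12\mathcal{S}_{00}-\mathcal{S}_{01}+\tfrac12\mathcal{S}_{11}+2n\ \ge\ 0.$$ Consequently, for every $n$-party local hidden variable model in which each party $i$ has two $\pm1$-valued observables $\mathcal{M}_0^{(i)},\mathcal{M}_1^{(i)}$, the same inequality holds with $\mathcal{S}_k=\sum_i\langle\mathcal{M}_k^{(i)}\rangle$ and $\mathcal{S}_{kl}=\sum_{i\ne j}\langle\mathcal{M}_k^{(i)}\mathcal{M}_l^{(j)}\rangle$.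
   Context: A local hidden variable (classical) model for $n$ parties each with two $\pm1$-valued measurements $k\in\{0,1\}$ is a probability distribution $q_\lambda$ over deterministic assignments $\lambda$ of values $\mathcal{M}_k^{(i)}(\lambda)\in\{\pm1\}$; expectation values are $\langle\prod \mathcal{M}\rangle=\sum_\lambda q_\lambda\prod\mathcal{M}(\lambda)$. Deterministic assignments correspond to $a_i=\mathcal{M}_0^{(i)}(\lambda)$, $b_i=\mathcal{M}_1^{(i)}(\lambda)$. *)

From HB Require Import structures.
From mathcomp Require Import all_boot all_order all_algebra.
Set Implicit Arguments. Unset Strict Implicit. Unset Printing Implicit Defensive.
Import Order.TTheory GRing.Theory Num.Theory.
Local Open Scope ring_scope.

Definition pm1 {R : ringType} (x : R) : Prop := x = 1 \/ x = -1.

Definition bell_expr {R : fieldType} (n : nat) (S0 S00 S01 S11 : R) : R :=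
  - (2 * S0) + S00 / 2 - S01 + S11 / 2 + 2 * n%:R.

Definition offdiag_sum {R : ringType} (n : nat) (F : 'I_n -> 'I_n -> R) : R :=
  \sum_(i < n) \sum_(j < n | j != i) F i j.

(* Writing A = sum a_i, B = sum b_i and C = sum a_i b_i, the off-diagonal sums are
   A^2 - n, B^2 - n and AB - C, and the Bell expression becomes
   (A - B)^2 / 2 - (A - B) + sum_i (1 - a_i)(1 - b_i).
   The last sum is nonnegative termwise, and since z = (A - B) / 2 is an integer
   the first two terms equal 2 z (z - 1) >= 0.  The expression is affine in the
   correlations, so it stays nonnegative under any probabilistic mixture of
   deterministic assignments. *)
From HB Require Import structures.
From mathcomp Require Import all_boot all_order all_algebra.
From mathcomp Require Import zify ring lra.
Set Implicit Arguments. Unset Strict Implicit. Unset Printing Implicit Defensive.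
Import Order.TTheory GRing.Theory Num.Theory.
Local Open Scope ring_scope.

Lemma offdiag_sum_mul (R : comNzRingType) n (f g : 'I_n -> R) :
  offdiag_sum (fun i j => f i * g j) =
  (\sum_(i < n) f i) * (\sum_(j < n) g j) - \sum_(i < n) f i * g i.
Proof.
rewrite /offdiag_sum big_distrl /= -sumrB; apply: eq_bigr => i _.
by rewrite big_distrr [in RHS](bigD1 i) //= addrAC subrr add0r.
Qed.

Lemma pm1_le1 (R : numDomainType) (x : R) : pm1 x -> x <= 1.
Proof. by case=> ->; [exact: lexx | exact: (le_trans (lerN10 R) ler01)]. Qed.

Lemma pm1_mul_self (R : nzRingType) (x : R) : pm1 x -> x * x = 1.
Proof. by case=> ->; rewrite ?mulrNN mulr1. Qed.

Lemma sum_pm1_mul_self (R : nzRingType) n (a : 'I_n -> R) :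
  (forall i, pm1 (a i)) -> \sum_(i < n) a i * a i = n%:R.
Proof.
move=> ha; rewrite (eq_bigr (fun=> 1)) ?sumr_const ?card_ord // => i _.
exact: pm1_mul_self.
Qed.

Lemma sub_pm1_even (R : nzRingType) (x y : R) :
  pm1 x -> pm1 y -> exists z : int, x - y = 2 * z%:~R.
Proof.
case=> ->; case=> ->.
- by exists 0; rewrite subrr mulr0.
- by exists 1; rewrite opprK mulr1.
- by exists (-1); rewrite mulrN1z mulrN1 opprD.
- by exists 0; rewrite subrr mulr0.
Qed.

Lemma sub_sum_pm1_even (R : nzRingType) n (a b : 'I_n -> R) :
  (forall i, pm1 (a i)) -> (forall i, pm1 (b i)) ->
  exists z : int, \sum_(i < n) a i - \sum_(i < n) b i = 2 * z%:~R.
Proof.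
move=> ha hb; rewrite -sumrB.
apply: (big_ind (fun x : R => exists z : int, x = 2 * z%:~R)).
- by exists 0; rewrite mulr0.
- by move=> _ _ [u ->] [v ->]; exists (u + v); rewrite rmorphD mulrDr.
- by move=> i _; apply: sub_pm1_even.
Qed.

Lemma intr_mul_pred_ge0 (R : numDomainType) (z : int) :
  0 <= (z%:~R : R) * (z%:~R - 1).
Proof.
have : 0 <= z * (z - 1) by nia.
by rewrite -(ler0z R) rmorphM rmorphB.
Qed.

Lemma bell_expr_pm1_ge0 (R : realFieldType) n (a b : 'I_n -> R) :
  (forall i, pm1 (a i)) -> (forall i, pm1 (b i)) ->
  0 <= bell_expr n (\sum_(i < n) a i)
                   (offdiag_sum (fun i j => a i * a j))
                   (offdiag_sum (fun i j => a i * b j))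
                   (offdiag_sum (fun i j => b i * b j)).
Proof.
move=> ha hb; have [z A_sub_B] := sub_sum_pm1_even ha hb.
rewrite /bell_expr !offdiag_sum_mul !sum_pm1_mul_self //.
set A := \sum_(i < n) a i; set B := \sum_(i < n) b i.
set C := \sum_(i < n) a i * b i.
have sum_one_sub_mul : n%:R - A - B + C = \sum_(i < n) (1 - a i) * (1 - b i).
  rewrite -[n in n%:R]card_ord -sumr_const /A /B /C -!sumrB -big_split /=.
  by apply: eq_bigr => i _; ring.
have -> : - (2 * A) + (A * A - n%:R) / 2 - (A * B - C) + (B * B - n%:R) / 2
          + 2 * n%:R = (A - B) * (A - B) / 2 - (A - B) + (n%:R - A - B + C)
  by field.
rewrite A_sub_B sum_one_sub_mul; apply: addr_ge0.
- have -> : 2 * z%:~R * (2 * z%:~R) / 2 - 2 * z%:~R = 2 * ((z%:~R : R) * (z%:~R - 1))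
    by field.
  by apply: mulr_ge0; [lra | exact: intr_mul_pred_ge0].
- apply: sumr_ge0 => i _.
  by apply: mulr_ge0; rewrite subr_ge0 pm1_le1.
Qed.

Section Mixture.

Variables (R : nzRingType) (Lam : finType) (q : Lam -> R) (n : nat).

Lemma exchange_weighted_sum (F : Lam -> 'I_n -> R) :
  \sum_(i < n) \sum_l q l * F l i = \sum_l q l * \sum_(i < n) F l i.
Proof. by rewrite exchange_big /=; apply: eq_bigr => l _; rewrite mulr_sumr. Qed.

Lemma offdiag_sum_weighted (F : Lam -> 'I_n -> 'I_n -> R) :
  offdiag_sum (fun i j => \sum_l q l * F l i j) = \sum_l q l * offdiag_sum (F l).
Proof.
rewrite /offdiag_sum -exchange_weighted_sum; apply: eq_bigr => i _.
by rewrite exchange_big /=; apply: eq_bigr => l _; rewrite mulr_sumr.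
Qed.

End Mixture.

Lemma bell_expr_mean (R : fieldType) n (Lam : finType) (q x y z w : Lam -> R) :
  \sum_l q l = 1 ->
  bell_expr n (\sum_l q l * x l) (\sum_l q l * y l)
              (\sum_l q l * z l) (\sum_l q l * w l)
  = \sum_l q l * bell_expr n (x l) (y l) (z l) (w l).
Proof.
move=> q_sum1.
rewrite [RHS](eq_bigr (fun l => - (2 * (q l * x l)) + q l * y l / 2
                                - q l * z l + q l * w l / 2 + 2 * n%:R * q l));
  last by move=> l _; rewrite /bell_expr; ring.
by rewrite !big_split /= !sumrN -!mulr_sumr -!mulr_suml q_sum1 mulr1.
Qed.

(* Measurement settings k in {0,1} are encoded as bool: false = 0, true = 1. *)
Theorem mainTheorem2 (R : realFieldType) (n : nat) (hn : (2 <= n)%N) :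
  (forall a b : 'I_n -> R,
     (forall i, pm1 (a i)) -> (forall i, pm1 (b i)) ->
     0 <= bell_expr n (\sum_(i < n) a i)
                      (offdiag_sum (fun i j => a i * a j))
                      (offdiag_sum (fun i j => a i * b j))
                      (offdiag_sum (fun i j => b i * b j)))
  /\
  (forall (Lam : finType) (q : Lam -> R) (M : Lam -> 'I_n -> bool -> R),
     (forall l, 0 <= q l) -> \sum_(l : Lam) q l = 1 ->
     (forall l i k, pm1 (M l i k)) ->
     let E1 := fun i k => \sum_(l : Lam) q l * M l i k in
     let E2 := fun i j k k' => \sum_(l : Lam) q l * (M l i k * M l j k') in
     0 <= bell_expr n (\sum_(i < n) E1 i false)
                      (offdiag_sum (fun i j => E2 i j false false))
                      (offdiag_sum (fun i j => E2 i j false true))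
                      (offdiag_sum (fun i j => E2 i j true true))).
Proof.
split=> [|Lam q M q_ge0 q_sum1 M_pm1 /=]; first exact: bell_expr_pm1_ge0.
rewrite exchange_weighted_sum.
rewrite (offdiag_sum_weighted q (fun l i j => M l i false * M l j false)).
rewrite (offdiag_sum_weighted q (fun l i j => M l i false * M l j true)).
rewrite (offdiag_sum_weighted q (fun l i j => M l i true * M l j true)).
rewrite bell_expr_mean //; apply: sumr_ge0 => l _.
by apply: mulr_ge0 => //; apply: bell_expr_pm1_ge0.
Qed.
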